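(* Let $K$ be a field, $S=K[x_1,\dots,x_n]$, $A\subseteq\{1,\dots,n\}$ and $f=\prod_{j\in A}x_j$. Then $\operatorname{sdepth}(S_f)=n$.
   Context: $S_f=K[x_1,\dots,x_n,x_j^{-1}:j\in A]$, with $K$-basis the monomials $x_1^{a_1}\cdots x_n^{a_n}$, $a_j\in\mathbb Z$ for $j\in A$, $a_j\in\mathbb N$ otherwise. A Stanley space of $S_f$ is $uK[Z]$, the $K$-span of all $uw$ ($w$ a monomial in the elements of $Z$), where $u$ is a monomial, $Z\subseteq\{x_1,\dots,x_n\}\cup\{x_j^{-1}:j\in A\}$ with $\{x_j,x_j^{-1}\}\not\subseteq Z$ for all $j\in A$, and $uK[Z]$ is a free $K[Z]$-module; its dimension is $|Z|$. A Stanley decomposition $\mathcal D$ is a finite direct sum of Stanley spaces equal to $S_f$; $\operatorname{sdepth}\mathcal D$ is the minimal dimension of its spaces and $\operatorname{sdepth}(S_f)$ the maximum of $\operatorname{sdepth}\mathcal D$ over all Stanley decompositions. *)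

From mathcomp Require Import all_boot all_order all_algebra.
Set Implicit Arguments. Unset Strict Implicit. Unset Printing Implicit Defensive.
Import Order.TTheory GRing.Theory Num.Theory.
Local Open Scope ring_scope.

(* Exponent vectors of Laurent monomials x_1^{a_1}...x_n^{a_n}, a_j : int.
   Variables are indexed by 'I_n (x_1..x_n correspond to 0..n-1). *)
Definition expo (n : nat) := {ffun 'I_n -> int}.

(* Generators: (j, true) stands for x_j, (j, false) stands for x_j^{-1}. *)
Definition gen (n : nat) := ('I_n * bool)%type.

Definition is_monomial_Sf n (A : {set 'I_n}) (a : expo n) : Prop :=
  forall j, j \notin A -> 0 <= a j.

(* Elements of the K-vector space with basis the Laurent monomials:
   finitely supported coefficient functions. *)
Definition fin_supp (K : fieldType) n (p : expo n -> K) : Prop :=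
  exists s : seq (expo n), forall a, p a != 0 -> a \in s.

(* p lies in S_f = K[x_1,...,x_n, x_j^{-1} : j in A] *)
Definition in_Sf (K : fieldType) n (A : {set 'I_n}) (p : expo n -> K) : Prop :=
  fin_supp p /\ forall a, p a != 0 -> is_monomial_Sf A a.

Record stanley_space (n : nat) := SSpace { ss_u : expo n; ss_Z : {set gen n} }.

(* exponent of u * w where w = prod_{z} z^{c z} *)
Definition exp_of n (u : expo n) (c : gen n -> nat) : expo n :=
  [ffun j => u j + (c (j, true))%:Z - (c (j, false))%:Z].

Definition supported_in n (Z : {set gen n}) (c : gen n -> nat) : Prop :=
  forall z, z \notin Z -> c z = 0%N.

Definition in_monset n (S : stanley_space n) (a : expo n) : Prop :=
  exists c : gen n -> nat, supported_in (ss_Z S) c /\ a = exp_of (ss_u S) c.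

Definition in_span (K : fieldType) n (S : stanley_space n) (p : expo n -> K) : Prop :=
  fin_supp p /\ forall a, p a != 0 -> in_monset S a.

(* u K[Z] is an admissible Stanley space of S_f: u a monomial of S_f,
   Z subset of {x_1..x_n} u {x_j^{-1} : j in A}, never both x_j and x_j^{-1},
   and u K[Z] free over K[Z] (distinct monomials w of K[Z] give distinct u w). *)
Definition valid_space n (A : {set 'I_n}) (S : stanley_space n) : Prop :=
  [/\ is_monomial_Sf A (ss_u S),
      (forall j, (j, false) \in ss_Z S -> j \in A),
      (forall j, ~ ((j, true) \in ss_Z S /\ (j, false) \in ss_Z S)) &
      (forall c1 c2, supported_in (ss_Z S) c1 -> supported_in (ss_Z S) c2 ->
         exp_of (ss_u S) c1 = exp_of (ss_u S) c2 -> forall z, c1 z = c2 z)].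

Definition dflt_space n : stanley_space n := SSpace [ffun=> 0] set0.
Definition dspace n (D : seq (stanley_space n)) (i : 'I_(size D)) :=
  nth (@dflt_space n) D i.

Definition stanley_decomp (K : fieldType) n (A : {set 'I_n})
    (D : seq (stanley_space n)) : Prop :=
  [/\ (forall i : 'I_(size D), valid_space A (dspace i)),
      (forall (i : 'I_(size D)) (q : expo n -> K),
          in_span (dspace i) q -> in_Sf A q),
      (forall p : expo n -> K, in_Sf A p ->
         exists g : 'I_(size D) -> expo n -> K,
           (forall i, in_span (dspace i) (g i)) /\
           forall a, p a = \sum_(i < size D) g i a) &
      (forall g : 'I_(size D) -> expo n -> K,
         (forall i, in_span (dspace i) (g i)) ->
         (forall a, \sum_(i < size D) g i a = 0) ->
         forall i a, g i a = 0)].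

Definition sdepth_decomp n (D : seq (stanley_space n)) : nat :=
  \big[minn/n]_(S <- D) #|ss_Z S|.

Definition sdepth_Sf_is (K : fieldType) n (A : {set 'I_n}) (d : nat) : Prop :=
  (exists D, stanley_decomp K A D /\ sdepth_decomp D = d) /\
  (forall D, stanley_decomp K A D -> (sdepth_decomp D <= d)%N).

(* The monomials of S_f are sorted by their sign pattern: for B ⊆ A, the
   monomials whose negative exponents sit exactly at B form the Stanley space
   x_B^{-1} K[x_j^{-1} : j ∈ B, x_j : j ∉ B], of dimension n.  These 2^|A|
   spaces decompose S_f, so sdepth(S_f) >= n; the reverse bound holds since no
   Stanley space has more than n generators. *)
From mathcomp Require Import all_boot all_order all_algebra.
From mathcomp Require Import zify.
Set Implicit Arguments. Unset Strict Implicit. Unset Printing Implicit Defensive.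
Import Order.TTheory GRing.Theory Num.Theory.
Local Open Scope ring_scope.

Lemma sdepth_decomp_le n (D : seq (stanley_space n)) : (sdepth_decomp D <= n)%N.
Proof.
rewrite /sdepth_decomp; elim: D => [|S D IH]; first by rewrite big_nil.
by rewrite big_cons geq_min IH orbT.
Qed.

Lemma sdepth_decomp_map_uniform n (T : Type) (F : T -> stanley_space n) (s : seq T) :
  (forall x, #|ss_Z (F x)| = n) -> sdepth_decomp (map F s) = n.
Proof.
move=> HF; rewrite /sdepth_decomp big_map.
by elim: s => [|x s IH]; rewrite ?big_nil // big_cons IH HF minnn.
Qed.

Section MonomialPartition.

Variables (K : fieldType) (n : nat) (A : {set 'I_n}) (D : seq (stanley_space n)).
(* [block a] names the space containing the monomial [a]: splitting an element
   of S_f among the spaces then needs no decision procedure for [in_monset]. *)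
Variable block : expo n -> nat.

Hypothesis valid_D : forall i : 'I_(size D), valid_space A (dspace i).
Hypothesis monset_Sf :
  forall (i : 'I_(size D)) a, in_monset (dspace i) a -> is_monomial_Sf A a.
Hypothesis monset_disjoint :
  forall (i k : 'I_(size D)) a, in_monset (dspace i) a -> in_monset (dspace k) a -> i = k.
Hypothesis block_monset : forall a, is_monomial_Sf A a ->
  exists2 i : 'I_(size D), block a = i & in_monset (dspace i) a.

Lemma sum_spans_at (g : 'I_(size D) -> expo n -> K) i a :
  (forall k, in_span (dspace k) (g k)) -> in_monset (dspace i) a ->
  \sum_(k < size D) g k a = g i a.
Proof.
move=> hg mi; rewrite (bigD1 i) //= big1 ?addr0 // => k ki.
apply/eqP; apply: contraT => /(hg k).2 mk.
by rewrite (monset_disjoint mk mi) eqxx in ki.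
Qed.

Lemma stanley_decomp_of_partition : stanley_decomp K A D.
Proof.
split=> //.
- move=> i q [fq hq]; split=> // a /hq; exact: monset_Sf.
- move=> p [[s fp] hp].
  pose g (i : 'I_(size D)) a := if block a == i then p a else 0.
  have g_span i : in_span (dspace i) (g i).
    split=> [|a]; first by exists s => a; rewrite /g; case: ifP => [_ /fp|]; rewrite ?eqxx.
    rewrite /g; case: ifP => [/eqP bi pa|_]; last by rewrite eqxx.
    have [k bk mk] := block_monset (hp a pa).
    by rewrite -(val_inj (etrans (esym bk) bi)).
  exists g; split=> // a; have [pa0|pa] := eqVneq (p a) 0.
    by rewrite pa0 big1 // => i _; rewrite /g pa0; case: ifP.
  have [i bi mi] := block_monset (hp a pa).
  by rewrite (sum_spans_at g_span mi) /g bi eqxx.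
- move=> g hg hs i a; apply/eqP; apply: contraT => gi.
  have mi := (hg i).2 a gi.
  by rewrite -(sum_spans_at hg mi) hs eqxx in gi.
Qed.

End MonomialPartition.

Section SignDecomposition.

Variable n : nat.

Definition neg_supp (a : expo n) : {set 'I_n} := [set j | a j < 0].

(* The generator (j, b) is x_j if b and x_j^{-1} otherwise, so sign_space B
   is x_B^{-1} K[x_j^{-1} : j ∈ B, x_j : j ∉ B]. *)
Definition sign_gens (B : {set 'I_n}) : {set gen n} :=
  [set z : gen n | z.2 == (z.1 \notin B)].

Definition sign_space (B : {set 'I_n}) : stanley_space n :=
  SSpace [ffun j => if j \in B then -1 else 0] (sign_gens B).

Lemma in_monset_signP B a : in_monset (sign_space B) a <-> neg_supp a = B.
Proof.
split.
- move=> [c [Hc ->]]; apply/setP=> j; rewrite inE /exp_of !ffunE /=.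
  case: (boolP (j \in B)) => jB.
  + by rewrite (Hc (j, true)) ?inE ?jB //; lia.
  + by rewrite (Hc (j, false)) ?inE ?jB //; lia.
- move=> <-; exists (fun z : gen n =>
    if z.1 \in neg_supp a then (if z.2 then 0 else (absz (a z.1)).-1)%N
    else (if z.2 then absz (a z.1) else 0)%N).
  split; first by case=> j [] /=; rewrite inE /=; case: (j \in _).
  apply/ffunP=> j; rewrite /exp_of !ffunE /= inE; case: ltP => /=; lia.
Qed.

Lemma card_sign_gens B : #|ss_Z (sign_space B)| = n.
Proof.
have -> : ss_Z (sign_space B) = [set (j, j \notin B) | j : 'I_n].
  apply/setP=> -[j b]; rewrite inE /=.
  by apply/eqP/imsetP => [->|[k _ [-> ->]]] //; exists j.
by rewrite card_imset ?card_ord // => x y [].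
Qed.

Lemma valid_sign_space (A B : {set 'I_n}) :
  B \subset A -> valid_space A (sign_space B).
Proof.
move=> sBA; split=> /=.
- move=> j jA; rewrite ffunE; case: ifP => // jB.
  by rewrite (subsetP sBA _ jB) in jA.
- by move=> j; rewrite inE /= eq_sym eqbF_neg negbK; apply: (subsetP sBA).
- by move=> j; rewrite !inE /=; case: (j \in B) => -[] /eqP.
- move=> c1 c2 H1 H2 /ffunP E [j b].
  have := E j; rewrite /exp_of !ffunE => Ej.
  case: (boolP ((j, b) \in sign_gens B)) => [|jbZ]; last by rewrite H1 ?H2.
  rewrite inE /= => /eqP hb.
  have Z' : (j, ~~ b) \notin sign_gens B.
    by rewrite inE /= hb; case: (j \in B).
  move: (H1 _ Z') (H2 _ Z') Ej; case: b {hb Z'} => /= -> -> Ej; lia.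
Qed.

Lemma sign_decomp (K : fieldType) (A : {set 'I_n}) :
  stanley_decomp K A (map sign_space (enum (powerset A))).
Proof.
set e := enum (powerset A); set D := map sign_space e.
have sizeD : size D = size e by rewrite size_map.
have dspaceE (i : 'I_(size D)) : dspace i = sign_space (nth set0 e i).
  by rewrite /dspace (nth_map set0) // -sizeD.
have sub_e (i : 'I_(size D)) : nth set0 e i \subset A.
  have i_e : (i < size e)%N by rewrite -sizeD.
  by have := mem_nth set0 i_e; rewrite mem_enum inE.
apply: (@stanley_decomp_of_partition _ _ _ _ (fun a => index (neg_supp a) e)).
- by move=> i; rewrite dspaceE; apply/valid_sign_space/sub_e.
- move=> i a; rewrite dspaceE => /in_monset_signP Ba j.
  apply: contraR; rewrite -ltNge => neg_j.
  by apply: (subsetP (sub_e i)); rewrite -Ba inE.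
- move=> i k a; rewrite !dspaceE => /in_monset_signP Ei /in_monset_signP Ek.
  have i_e : (i < size e)%N by rewrite -sizeD.
  have k_e : (k < size e)%N by rewrite -sizeD.
  have e_uniq : uniq e by apply: enum_uniq.
  apply: val_inj; apply/eqP; rewrite -(nth_uniq set0 i_e k_e e_uniq).
  by rewrite -Ei -Ek.
- move=> a Sa; have neg_e : neg_supp a \in e.
    rewrite mem_enum inE; apply/subsetP=> j; rewrite inE.
    by apply: contraTT => jA; rewrite -leNgt; apply: Sa.
  have lt : (index (neg_supp a) e < size D)%N by rewrite sizeD index_mem.
  exists (Ordinal lt) => //; rewrite dspaceE /=.
  by apply/in_monset_signP; rewrite nth_index.
Qed.

End SignDecomposition.

Theorem corollary2p3 (K : fieldType) (n : nat) (A : {set 'I_n}) :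
  sdepth_Sf_is K A n.
Proof.
split; last by move=> D _; apply: sdepth_decomp_le.
exists (map (@sign_space n) (enum (powerset A))); split; first exact: sign_decomp.
by apply: sdepth_decomp_map_uniform; apply: card_sign_gens.
Qed.
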